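(* Let $V:S^1\to\mathbb R$ be continuous and odd, $D>0$, and let $f\ge0$ be a ($\mathcal C^2$) stationary solution of (TP) with $\int_{S^1}f=1$. Then $f$ satisfies $D f'=-(V*f)f$ on $S^1$. With $C=\max V/D$, for all $\theta_1,\theta_2\in S^1$, $$f(\theta_1)e^{-C|\theta_1-\theta_2|}\le f(\theta_2)\le f(\theta_1)e^{C|\theta_1-\theta_2|},$$ where $|\theta_1-\theta_2|\le\tfrac12$ is the distance on $S^1$. Consequently $\max f/\min f\le e^{C/2}$, $\max f\le e^{C/2}$ and $\min f\ge e^{-C/2}$. If moreover $V\in\mathcal C^1$, then at any maximum point $\theta_{\max}$ of $f$, $f''(\theta_{\max})\ge-\frac{\max V'}{D}f(\theta_{\max})$, and at any minimum point $\theta_{\min}$, $f''(\theta_{\min})\le-\frac{\min V'}{D}f(\theta_{\min})$.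
   Context: $S^1=\mathbb R/\mathbb Z$; $(V*f)(\theta)=\int_{S^1}V(\theta-\psi)f(\psi)d\psi$. Equation (TP): $\partial_tf=D\partial_\theta^2f+\partial_\theta((V*f)f)$. A stationary solution is a time-independent solution, i.e. $Df''+((V*f)f)'=0$. *)

From Stdlib Require Import Reals Lra ClassicalEpsilon.
Open Scope R_scope.

(* Functions on S^1 = R/Z are represented as 1-periodic functions R -> R. *)
Definition periodic1 (g : R -> R) : Prop := forall x, g (x + 1) = g x.

(* Integral over S^1 (i.e. over [0,1]); the Riemann integral when it exists,
   0 otherwise (it always exists for the continuous integrands used here). *)
Definition int_S1 (g : R -> R) : R :=
  match excluded_middle_informative (exists pr : Riemann_integrable g 0 1, True) with
  | left H => RiemannInt (proj1_sig (constructive_indefinite_description _ H))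
  | right _ => 0
  end.

Definition conv (V f : R -> R) (theta : R) : R :=
  int_S1 (fun psi => V (theta - psi) * f psi).

Definition dist_S1 (x y : R) : R :=
  Rmin (frac_part (x - y)) (1 - frac_part (x - y)).

Definition is_max_val (g : R -> R) (M : R) : Prop :=
  (forall x, g x <= M) /\ exists x0, g x0 = M.
Definition is_min_val (g : R -> R) (m : R) : Prop :=
  (forall x, m <= g x) /\ exists x0, g x0 = m.

From Stdlib Require Import Reals Lra Lia ZArith ClassicalEpsilon.
From Coquelicot Require Import Coquelicot.
Open Scope R_scope.

(** 1. First integral.  For odd [V], Fubini gives [int (V * f) f = 0]
       (the double integral of [V (x - t) f t f x] is antisymmetric).  Since
       [D f' + (V * f) f] has zero derivative it is constant, and its mean over
       a period is [D (f 1 - f 0) + 0 = 0]; hence [D f' = - (V * f) f].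
    2. Harnack.  As [f >= 0] has mass 1, [|V * f| <= max |V| = max V], so
       [|f'| <= C f] with [C = max V / D]; Groenwall on the line, transported
       to S^1 by periodicity, gives [f t2 <= f t1 exp (C dist (t1, t2))].
       With [min f <= 1 <= max f] this bounds the extreme values of [f].
    3. Second order.  At an extremum [f' = 0]; the slopes of [V * f] lie
       between [min V'] and [max V'], and comparing [(V * f) f] with a
       one-sided linear majorant (minorant) bounds [((V * f) f)' = - D f'']. *)

Lemma nonincreasing_of_deriv_nonpos (g g' : R -> R) :
  (forall x, derivable_pt_lim g x (g' x)) -> (forall x, g' x <= 0) ->
  forall a b, a <= b -> g b <= g a.
Proof.
  intros Hd Hneg a b Hab.
  destruct (MVT_gen g a b g') as [c [_ Hc]].
  - intros x _. apply is_derive_Reals, Hd.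
  - intros x _. apply derivable_continuous_pt. exists (g' x). apply Hd.
  - specialize (Hneg c). nra.
Qed.

Lemma const_of_deriv_zero (g : R -> R) :
  (forall x, derivable_pt_lim g x 0) -> forall x y, g x = g y.
Proof.
  intros Hd.
  assert (Hmono : forall a b, a <= b -> g b <= g a).
  { apply (nonincreasing_of_deriv_nonpos g (fun _ => 0)); [exact Hd | intros; lra]. }
  assert (Hanti : forall a b, a <= b -> - g b <= - g a).
  { apply (nonincreasing_of_deriv_nonpos (fun x => - g x) (fun _ => 0)); [|intros; lra].
    intros x. rewrite <- Ropp_0. apply derivable_pt_lim_opp, Hd. }
  intros x y. destruct (Rle_dec x y) as [Hxy|Hyx].
  - specialize (Hmono x y Hxy). specialize (Hanti x y Hxy). lra.
  - assert (Hle : y <= x) by lra.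
    specialize (Hmono y x Hle). specialize (Hanti y x Hle). lra.
Qed.

Lemma deriv_le_of_le_right (u w : R -> R) x lu lw :
  derivable_pt_lim u x lu -> derivable_pt_lim w x lw ->
  u x = w x -> (forall t, x < t -> u t <= w t) -> lu <= lw.
Proof.
  intros Hu Hw Hx Hle.
  assert (Hd : derivable_pt_lim (fun t => w t - u t) x (lw - lu))
    by (apply (derivable_pt_lim_minus w u); assumption).
  destruct (Rle_dec lu lw) as [|Hlt]; [assumption|]. exfalso.
  destruct (Hd (lu - lw)) as [d Hdd]; [lra|].
  pose proof (cond_pos d) as Hdpos.
  assert (Hq := Hdd (d / 2) ltac:(lra) ltac:(rewrite Rabs_right; lra)).
  assert (Hnn : 0 <= (w (x + d / 2) - u (x + d / 2) - (w x - u x)) / (d / 2)).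
  { rewrite Hx, Rminus_diag, Rminus_0_r. apply Rmult_le_pos.
    - specialize (Hle (x + d / 2) ltac:(lra)). lra.
    - apply Rlt_le, Rinv_0_lt_compat. lra. }
  apply Rabs_lt_between' in Hq. lra.
Qed.

Lemma product_deriv_upper (a f : R -> R) x lf lh L :
  derivable_pt_lim f x lf -> derivable_pt_lim (fun t => a t * f t) x lh ->
  (forall t, 0 <= f t) -> (forall t, x < t -> a t - a x <= L * (t - x)) ->
  lh <= a x * lf + L * f x.
Proof.
  intros Hf Hh Hfnn Hlip.
  apply (deriv_le_of_le_right (fun t => a t * f t)
           (fun t => a x * f t + L * ((t - x) * f t)) x); [exact Hh| | ring |].
  - replace (a x * lf + L * f x) with (a x * lf + L * (1 * f x + (x - x) * lf)) by ring.
    apply (derivable_pt_lim_plus (fun t => a x * f t) (fun t => L * ((t - x) * f t))).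
    + apply (derivable_pt_lim_scal f), Hf.
    + apply (derivable_pt_lim_scal (fun t => (t - x) * f t)).
      apply (derivable_pt_lim_mult (fun t => t - x) f); [|exact Hf].
      rewrite <- Rminus_0_r. apply (derivable_pt_lim_minus id (fct_cte x)).
      * apply derivable_pt_lim_id.
      * apply derivable_pt_lim_const.
  - intros t Ht. specialize (Hlip t Ht). specialize (Hfnn t). nra.
Qed.

Lemma product_deriv_lower (a f : R -> R) x lf lh L :
  derivable_pt_lim f x lf -> derivable_pt_lim (fun t => a t * f t) x lh ->
  (forall t, 0 <= f t) -> (forall t, x < t -> L * (t - x) <= a t - a x) ->
  a x * lf + L * f x <= lh.
Proof.
  intros Hf Hh Hfnn Hlip.
  assert (Hneg : derivable_pt_lim (fun t => - a t * f t) x (- lh)).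
  { apply (derivable_pt_lim_ext (fun t => - (a t * f t))); [intros; ring|].
    apply derivable_pt_lim_opp, Hh. }
  assert (H : - lh <= - a x * lf + - L * f x).
  { apply (product_deriv_upper (fun t => - a t) f x lf (- lh) (- L) Hf Hneg Hfnn).
    intros t Ht. specialize (Hlip t Ht). lra. }
  lra.
Qed.

Lemma ex_RInt_continuous_R (g : R -> R) a b :
  (forall x, continuity_pt g x) -> ex_RInt g a b.
Proof.
  intros Hg. apply (ex_RInt_continuous (V := R_CompleteNormedModule)).
  intros z _. apply continuity_pt_filterlim, Hg.
Qed.

Lemma int_S1_RInt (g : R -> R) :
  (forall x, continuity_pt g x) -> int_S1 g = RInt g 0 1.
Proof.
  intros Hg. unfold int_S1.
  destruct excluded_middle_informative as [H|H].
  - destruct (constructive_indefinite_description _ H) as [pr Hpr]. simpl.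
    symmetry. apply RInt_Reals.
  - exfalso. apply H.
    exists (continuity_implies_RiemannInt Rle_0_1 (fun x _ => Hg x)). exact I.
Qed.

Lemma RInt_ext_R (g k : R -> R) a b :
  (forall x, Rmin a b < x < Rmax a b -> g x = k x) -> RInt g a b = RInt k a b.
Proof. intros. apply (RInt_ext (V := R_CompleteNormedModule)); assumption. Qed.

Lemma RInt_plus_R (g k : R -> R) a b :
  ex_RInt g a b -> ex_RInt k a b ->
  RInt (fun x => g x + k x) a b = RInt g a b + RInt k a b.
Proof. intros. apply (RInt_plus (V := R_CompleteNormedModule)); assumption. Qed.

Lemma RInt_minus_R (g k : R -> R) a b :
  ex_RInt g a b -> ex_RInt k a b ->
  RInt (fun x => g x - k x) a b = RInt g a b - RInt k a b.
Proof. intros. apply (RInt_minus (V := R_CompleteNormedModule)); assumption. Qed.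

Lemma RInt_scal_R (g : R -> R) a b l :
  ex_RInt g a b -> RInt (fun x => l * g x) a b = l * RInt g a b.
Proof. intros. apply (RInt_scal (V := R_CompleteNormedModule)); assumption. Qed.

Lemma RInt_const_R (c a b : R) : RInt (fun _ => c) a b = c * (b - a).
Proof. rewrite (RInt_const (V := R_CompleteNormedModule)). simpl. apply Rmult_comm. Qed.

Lemma RInt_weighted_bounds (k w : R -> R) a b m M :
  a <= b -> (forall x, continuity_pt k x) -> (forall x, continuity_pt w x) ->
  (forall x, 0 <= w x) -> (forall x, m <= k x <= M) ->
  m * RInt w a b <= RInt (fun x => k x * w x) a b <= M * RInt w a b.
Proof.
  intros Hab Hk Hw Hwnn Hkb.
  assert (Hex : forall c, ex_RInt (fun x => c * w x) a b)
    by (intros c; apply ex_RInt_continuous_R; intros; apply continuity_pt_scal, Hw).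
  assert (Hkw : ex_RInt (fun x => k x * w x) a b)
    by (apply ex_RInt_continuous_R; intros; apply continuity_pt_mult; auto).
  assert (Hwi : ex_RInt w a b) by (apply ex_RInt_continuous_R, Hw).
  rewrite <- !RInt_scal_R by exact Hwi. split; apply RInt_le; auto;
    intros x _; specialize (Hkb x); specialize (Hwnn x); nra.
Qed.

Lemma continuity_2d_pt_fst (K : R -> R -> R) x y :
  continuity_2d_pt K x y -> continuity_pt (fun u => K u y) x.
Proof.
  intros HK eps Heps. destruct (HK (mkposreal _ Heps)) as [d Hd].
  exists d. split; [apply cond_pos|]. intros u [_ Hu].
  apply (Hd u y Hu). rewrite Rminus_diag, Rabs_R0. apply cond_pos.
Qed.

Lemma continuity_2d_pt_snd (K : R -> R -> R) x y :
  continuity_2d_pt K x y -> continuity_pt (fun v => K x v) y.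
Proof.
  intros HK eps Heps. destruct (HK (mkposreal _ Heps)) as [d Hd].
  exists d. split; [apply cond_pos|]. intros v [_ Hv].
  apply (Hd x v); [rewrite Rminus_diag, Rabs_R0; apply cond_pos | exact Hv].
Qed.

(* Integrating a jointly continuous kernel in one variable yields a
   continuous function of the other (uniform continuity on a compact strip). *)
Lemma continuity_RInt_param (K : R -> R -> R) a b y0 :
  (forall x y, continuity_2d_pt K x y) ->
  continuity_pt (fun y => RInt (fun t => K t y) a b) y0.
Proof.
  intros HK eps Heps.
  set (e := eps / (Rabs (b - a) + 1)).
  pose proof (Rabs_pos (b - a)) as Hba.
  assert (He : 0 < e) by (apply Rdiv_lt_0_compat; lra).
  destruct (uniform_continuity_2d K (Rmin a b) (Rmax a b) (y0 - 1) (y0 + 1)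
              (fun x y _ _ => HK x y) (mkposreal _ He)) as [delta Hd].
  exists (Rmin delta 1). split; [apply Rmin_pos; [apply cond_pos | lra]|].
  intros y [_ Hy]. simpl in *. unfold R_dist in *.
  assert (Hyd : Rabs (y - y0) < delta) by (eapply Rlt_le_trans; [exact Hy | apply Rmin_l]).
  assert (Hy1 : Rabs (y - y0) < 1) by (eapply Rlt_le_trans; [exact Hy | apply Rmin_r]).
  apply Rabs_lt_between' in Hy1.
  assert (Hex : forall y, ex_RInt (fun t => K t y) a b)
    by (intros y'; apply ex_RInt_continuous_R; intros z; apply continuity_2d_pt_fst, HK).
  rewrite <- RInt_minus_R by auto.
  apply Rle_lt_trans with (Rabs (b - a) * e).
  - apply (norm_RInt_le_const_abs (V := R_NormedModule) (fun t => K t y - K t y0)).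
    + intros x Hx. apply Rlt_le, (Hd x y0 x y); try lra.
      rewrite Rminus_diag, Rabs_R0. apply cond_pos.
    + apply (RInt_correct (V := R_CompleteNormedModule)).
      apply (ex_RInt_minus (V := R_NormedModule)); auto.
  - unfold e. apply Rlt_le_trans with ((Rabs (b - a) + 1) * (eps / (Rabs (b - a) + 1))).
    + apply Rmult_lt_compat_r; [apply Rdiv_lt_0_compat|]; lra.
    + right. field. lra.
Qed.

Lemma is_derive_RInt_upper (g : R -> R) a u :
  (forall x, continuity_pt g x) -> is_derive (fun z => RInt g a z) u (g u).
Proof.
  intros Hg. apply (is_derive_RInt (V := R_NormedModule) g (fun z => RInt g a z) a u).
  - apply filter_forall. intros b. apply (RInt_correct (V := R_CompleteNormedModule)).
    apply ex_RInt_continuous_R, Hg.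
  - apply continuity_pt_filterlim, Hg.
Qed.

(* Both iterated
   integrals, seen as functions of the upper bound [u] of the [x]-interval,
   vanish at [u = a] and have the same derivative, hence coincide. *)
Lemma RInt_swap_continuous (K : R -> R -> R) a b c d :
  (forall x y, continuity_2d_pt K x y) ->
  RInt (fun x => RInt (fun t => K x t) c d) a b =
  RInt (fun t => RInt (fun x => K x t) a b) c d.
Proof.
  intros HK.
  set (Phi := fun u => RInt (fun t => K u t) c d).
  assert (HPhi : forall u, continuity_pt Phi u).
  { intros u. apply (continuity_RInt_param (fun t u => K u t)).
    intros x y eps. destruct (HK y x eps) as [del Hdel]. exists del. auto. }
  set (G := fun u => RInt Phi a u).
  assert (HG : forall u, is_derive G u (Phi u))
    by (intros u; apply is_derive_RInt_upper, HPhi).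
  set (P := fun u t => RInt (fun x => K x t) a u).
  assert (HP : forall u t, is_derive (fun z => P z t) u (K u t)).
  { intros u t. apply (is_derive_RInt_upper (fun x => K x t)).
    intros x. apply continuity_2d_pt_fst, HK. }
  set (F := fun u => RInt (fun t => P u t) c d).
  assert (HF : forall u, is_derive F u (Phi u)).
  { intros u.
    replace (Phi u) with (RInt (fun t => Derive (fun z => P z t) u) c d).
    2: { apply RInt_ext. intros t _. apply is_derive_unique, HP. }
    apply (is_derive_RInt_param P c d u).
    - apply filter_forall. intros x0 t _. eexists. apply HP.
    - intros t _. apply continuity_2d_pt_ext with (f := K); [|apply HK].
      intros x y. symmetry. apply is_derive_unique, HP.
    - apply filter_forall. intros y. apply ex_RInt_continuous_R. intros t.
      apply continuity_RInt_param, HK. }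
  assert (HFG : forall u, derivable_pt_lim (fun u => F u - G u) u 0).
  { intros u. rewrite <- (Rminus_diag (Phi u)).
    apply derivable_pt_lim_minus; apply is_derive_Reals; auto. }
  assert (HFa : F a = 0).
  { unfold F, P. transitivity (RInt (fun _ : R => 0) c d).
    - apply RInt_ext. intros; apply (RInt_point (V := R_CompleteNormedModule)).
    - rewrite RInt_const_R. simpl; ring. }
  assert (HGa : G a = 0) by apply (RInt_point (V := R_CompleteNormedModule)).
  assert (Hb := const_of_deriv_zero _ HFG b a). cbv beta in Hb.
  rewrite HFa, HGa in Hb. unfold F, G, P, Phi in *. lra.
Qed.

Lemma derivable_pt_lim_mult_exp (f : R -> R) x l c :
  derivable_pt_lim f x l ->
  derivable_pt_lim (fun t => f t * exp (c * t)) x ((l + c * f x) * exp (c * x)).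
Proof.
  intros Hf.
  replace ((l + c * f x) * exp (c * x)) with (l * exp (c * x) + f x * (exp (c * x) * c)) by ring.
  apply (derivable_pt_lim_mult f (fun t => exp (c * t))); [exact Hf|].
  apply (derivable_pt_lim_comp (fun t => c * t) exp x c).
  - pose proof (derivable_pt_lim_scal id c x 1 (derivable_pt_lim_id x)) as H.
    rewrite Rmult_1_r in H. exact H.
  - apply derivable_pt_lim_exp.
Qed.

Lemma gronwall_exp_bound (f f1 : R -> R) (C : R) :
  (forall x, derivable_pt_lim f x (f1 x)) -> (forall x, Rabs (f1 x) <= C * f x) ->
  forall a b, f b <= f a * exp (C * Rabs (b - a)).
Proof.
  intros Hf Hbound a b.
  assert (Hf1 : forall x, - (C * f x) <= f1 x <= C * f x)
    by (intros x; apply Rabs_le_between, Hbound).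
  destruct (Rle_dec a b) as [Hab|Hab].
  -
    assert (Hdec := nonincreasing_of_deriv_nonpos (fun t => f t * exp (- C * t))
      (fun t => (f1 t + - C * f t) * exp (- C * t))
      (fun x => derivable_pt_lim_mult_exp f x (f1 x) (- C) (Hf x))).
    assert (H := Hdec ltac:(intros x; specialize (Hf1 x);
      pose proof (exp_pos (- C * x)); nra) a b Hab). cbv beta in H.
    apply Rmult_le_compat_r with (r := exp (C * b)) in H; [|apply Rlt_le, exp_pos].
    rewrite !Rmult_assoc, <- !exp_plus in H.
    replace (- C * b + C * b) with 0 in H by ring.
    replace (- C * a + C * b) with (C * (b - a)) in H by ring.
    rewrite exp_0 in H. rewrite Rabs_right by lra. lra.
  -
    assert (Hdec := nonincreasing_of_deriv_nonpos (fun t => - (f t * exp (C * t)))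
      (fun t => - ((f1 t + C * f t) * exp (C * t)))
      (fun x => derivable_pt_lim_opp _ x _ (derivable_pt_lim_mult_exp f x (f1 x) C (Hf x)))).
    assert (H := Hdec ltac:(intros x; specialize (Hf1 x);
      pose proof (exp_pos (C * x)); nra) b a ltac:(lra)). cbv beta in H.
    apply Ropp_le_cancel in H.
    apply Rmult_le_compat_r with (r := exp (- C * b)) in H; [|apply Rlt_le, exp_pos].
    rewrite !Rmult_assoc, <- !exp_plus in H.
    replace (C * b + - C * b) with 0 in H by ring.
    replace (C * a + - C * b) with (C * (b - a) * -1) in H by ring.
    rewrite exp_0 in H. rewrite Rabs_left by lra.
    replace (C * - (b - a)) with (C * (b - a) * -1) by ring. lra.
Qed.

Lemma periodic1_nat (g : R -> R) : periodic1 g -> forall n x, g (x + INR n) = g x.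
Proof.
  intros Hp n. induction n as [|n IH]; intros x.
  - simpl. f_equal. ring.
  - rewrite S_INR. replace (x + (INR n + 1)) with ((x + INR n) + 1) by ring.
    rewrite Hp. apply IH.
Qed.

Lemma periodic1_Z (g : R -> R) : periodic1 g -> forall k x, g (x + IZR k) = g x.
Proof.
  intros Hp k x.
  destruct (Z_le_gt_dec 0 k) as [H|H].
  - rewrite <- (Z2Nat.id k H), <- INR_IZR_INZ. apply periodic1_nat, Hp.
  - replace k with (- Z.of_nat (Z.to_nat (- k)))%Z by lia.
    rewrite opp_IZR, <- INR_IZR_INZ.
    rewrite <- (periodic1_nat g Hp (Z.to_nat (- k)) (x + - INR (Z.to_nat (- k)))).
    f_equal. ring.
Qed.

Lemma dist_S1_lift t1 t2 : exists k : Z, dist_S1 t1 t2 = Rabs (t2 + IZR k - t1).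
Proof.
  destruct (base_fp (t1 - t2)) as [F0 F1].
  assert (Efr : frac_part (t1 - t2) = t1 - t2 - IZR (Int_part (t1 - t2))) by reflexivity.
  unfold dist_S1, Rmin. destruct Rle_dec.
  - exists (Int_part (t1 - t2)). rewrite Rabs_left1; lra.
  - exists (Int_part (t1 - t2) + 1)%Z. rewrite plus_IZR, Rabs_right; lra.
Qed.

Lemma dist_S1_le_half t1 t2 : 0 <= dist_S1 t1 t2 <= 1 / 2.
Proof.
  destruct (base_fp (t1 - t2)) as [F0 F1]. unfold dist_S1, Rmin.
  destruct Rle_dec; lra.
Qed.

Lemma periodic_exp_bound (g : R -> R) (C : R) :
  periodic1 g -> (forall a b, g b <= g a * exp (C * Rabs (b - a))) ->
  forall t1 t2, g t2 <= g t1 * exp (C * dist_S1 t1 t2) /\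
                g t1 <= g t2 * exp (C * dist_S1 t1 t2).
Proof.
  intros Hp Hline t1 t2. destruct (dist_S1_lift t1 t2) as [k Hk].
  rewrite Hk, <- (periodic1_Z g Hp k t2). split; [apply Hline|].
  rewrite Rabs_minus_sym. apply Hline.
Qed.

Section StationarySolution.

Variables (V f f1 : R -> R).
Hypothesis HVc : continuity V.
Hypothesis HVodd : forall x, V (- x) = - V x.
Hypothesis Hf1 : forall x, derivable_pt_lim f x (f1 x).
Hypothesis Hfnn : forall x, 0 <= f x.
Hypothesis Hmass : int_S1 f = 1.
Hypothesis Hfp : periodic1 f.

Lemma f_continuous : forall x, continuity_pt f x.
Proof. intros x. apply derivable_continuous_pt. exists (f1 x). apply Hf1. Qed.

Lemma conv_kernel_continuous :
  forall x y, continuity_2d_pt (fun u v => V (u - v) * f v) x y.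
Proof.
  intros x y. apply continuity_2d_pt_mult.
  - apply (continuity_1d_2d_pt_comp V (fun u v => u - v)); [apply HVc|].
    apply continuity_2d_pt_minus; [apply continuity_2d_pt_id1 | apply continuity_2d_pt_id2].
  - apply (continuity_1d_2d_pt_comp f (fun u v => v)); [apply f_continuous|].
    apply continuity_2d_pt_id2.
Qed.

Lemma conv_RInt x : conv V f x = RInt (fun psi => V (x - psi) * f psi) 0 1.
Proof.
  apply int_S1_RInt. intros psi.
  apply (continuity_2d_pt_snd (fun u v => V (u - v) * f v)), conv_kernel_continuous.
Qed.

Lemma conv_continuous : forall x, continuity_pt (conv V f) x.
Proof.
  intros x. apply (continuity_pt_ext (fun x => RInt (fun psi => V (x - psi) * f psi) 0 1)).
  - intros y. symmetry. apply conv_RInt.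
  - apply (continuity_RInt_param (fun psi x => V (x - psi) * f psi)).
    intros u v eps. destruct (conv_kernel_continuous v u eps) as [d Hd].
    exists d. auto.
Qed.

Lemma mass_RInt : RInt f 0 1 = 1.
Proof. rewrite <- int_S1_RInt; [exact Hmass | exact f_continuous]. Qed.

Lemma f_average_bounds (k : R -> R) m M :
  continuity k -> (forall y, m <= k y <= M) ->
  m <= RInt (fun psi => k psi * f psi) 0 1 <= M.
Proof.
  intros Hk Hkb.
  assert (H := RInt_weighted_bounds k f 0 1 m M Rle_0_1 Hk f_continuous Hfnn Hkb).
  rewrite mass_RInt, !Rmult_1_r in H. exact H.
Qed.

Lemma extrema_mass_bounds mf Mf :
  (forall x, mf <= f x <= Mf) -> mf <= 1 <= Mf.
Proof.
  intros Hb.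
  assert (H := RInt_weighted_bounds f (fun _ => 1) 0 1 mf Mf Rle_0_1 f_continuous
                 (fun x => continuity_pt_const (fun _ => 1) x (fun _ _ => eq_refl))
                 (fun _ => Rle_0_1) Hb).
  rewrite RInt_const_R, (RInt_ext_R (fun x => f x * 1) f), mass_RInt in H
    by (intros; ring).
  lra.
Qed.

(* An odd [V] with maximum [MV] satisfies [|V| <= MV], hence [|V * f| <= MV]. *)
Lemma conv_bounds MV : (forall y, V y <= MV) -> forall x, - MV <= conv V f x <= MV.
Proof.
  intros HMV x. rewrite conv_RInt.
  apply (f_average_bounds (fun psi => V (x - psi))).
  - intros psi. apply continuity_pt_comp; [|apply HVc].
    apply continuity_pt_minus; [apply continuity_pt_const; intros ? ?; reflexivity |
                                apply derivable_continuous_pt, derivable_pt_id].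
  - intros psi. split; [|apply HMV].
    specialize (HMV (- (x - psi))). rewrite HVodd in HMV. lra.
Qed.

Lemma conv_increment_bounds V1 mV1 MV1 :
  (forall x, derivable_pt_lim V x (V1 x)) -> (forall x, mV1 <= V1 x <= MV1) ->
  forall s t, s <= t ->
  mV1 * (t - s) <= conv V f t - conv V f s <= MV1 * (t - s).
Proof.
  intros HV1 HV1b s t Hst.
  assert (Hk : forall x, ex_RInt (fun psi => V (x - psi) * f psi) 0 1).
  { intros x. apply ex_RInt_continuous_R. intros psi.
    apply (continuity_2d_pt_snd (fun u v => V (u - v) * f v)), conv_kernel_continuous. }
  rewrite !conv_RInt, <- RInt_minus_R by apply Hk.
  rewrite (RInt_ext_R _ (fun psi => (V (t - psi) - V (s - psi)) * f psi)) by (intros; ring).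
  apply f_average_bounds.
  - intros psi. apply continuity_pt_minus; apply continuity_pt_comp; try apply HVc;
      apply continuity_pt_minus; try (apply continuity_pt_const; intros ? ?; reflexivity);
      apply derivable_continuous_pt, derivable_pt_id.
  - intros psi. destruct (MVT_gen V (s - psi) (t - psi) V1) as [c [_ Hc]].
    + intros; apply is_derive_Reals, HV1.
    + intros; apply HVc.
    + rewrite Hc. replace (t - psi - (s - psi)) with (t - s) by ring.
      specialize (HV1b c). split; nra.
Qed.

(* Antisymmetry: for odd [V], [int (V * f) f = 0].  By Fubini the double
   integral of [V (x - t) f t f x] equals itself with [x] and [t] exchanged,
   which is its opposite. *)
Lemma conv_times_f_integral_zero : RInt (fun x => conv V f x * f x) 0 1 = 0.
Proof.
  set (I := RInt (fun x => conv V f x * f x) 0 1).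
  assert (Hf := f_continuous).
  assert (HK : forall x y, continuity_2d_pt (fun x t => V (x - t) * f t * f x) x y).
  { intros x y. apply continuity_2d_pt_mult; [apply conv_kernel_continuous|].
    apply (continuity_1d_2d_pt_comp f (fun u v => u)); [apply Hf|].
    apply continuity_2d_pt_id1. }
  assert (Hex : ex_RInt (fun x => conv V f x * f x) 0 1).
  { apply ex_RInt_continuous_R. intros x.
    apply continuity_pt_mult; [apply conv_continuous | apply Hf]. }
  assert (Hinner : forall x, RInt (fun t => V (x - t) * f t * f x) 0 1 = conv V f x * f x).
  { intros x. rewrite conv_RInt, Rmult_comm, <- RInt_scal_R.
    - apply RInt_ext_R. intros; ring.
    - apply ex_RInt_continuous_R. intros psi.
      apply (continuity_2d_pt_snd (fun u v => V (u - v) * f v)), conv_kernel_continuous. }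
  assert (Hswapped : forall t,
             RInt (fun x => V (x - t) * f t * f x) 0 1 = -1 * (conv V f t * f t)).
  { intros t. rewrite <- (Hinner t), <- RInt_scal_R.
    - apply RInt_ext_R. intros x _. replace (x - t) with (- (t - x)) by ring.
      rewrite HVodd. ring.
    - apply ex_RInt_continuous_R. intros x.
      apply (continuity_2d_pt_snd (fun u v => V (u - v) * f v * f u)), HK. }
  assert (Hswap := RInt_swap_continuous _ 0 1 0 1 HK).
  rewrite (RInt_ext_R _ _ _ _ (fun x _ => Hinner x)),
          (RInt_ext_R _ _ _ _ (fun t _ => Hswapped t)) in Hswap.
  rewrite RInt_scal_R in Hswap by exact Hex. fold I in Hswap. lra.
Qed.

(* Indeed
   [D f' + (V * f) f] has derivative [D f'' + ((V * f) f)' = 0], so it is a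
   constant, and its integral over a period is [D (f 1 - f 0) + 0 = 0]. *)
Lemma stationary_first_integral (D : R) (f2 h : R -> R) :
  (forall x, derivable_pt_lim f1 x (f2 x)) ->
  (forall x, derivable_pt_lim (fun t => conv V f t * f t) x (h x)) ->
  (forall x, D * f2 x + h x = 0) ->
  forall x, D * f1 x = - (conv V f x * f x).
Proof.
  intros Hf2 Hh Hstat.
  set (g := fun x => D * f1 x + conv V f x * f x).
  assert (Hg : forall x, derivable_pt_lim g x 0).
  { intros x. rewrite <- (Hstat x).
    apply (derivable_pt_lim_plus (fun x => D * f1 x) (fun t => conv V f t * f t)); [|apply Hh].
    apply (derivable_pt_lim_scal f1), Hf2. }
  assert (Hf1c : forall x, continuity_pt f1 x).
  { intros x. apply derivable_continuous_pt. exists (f2 x). apply Hf2. }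
  assert (Hprod : forall x, continuity_pt (fun t => conv V f t * f t) x).
  { intros x. apply derivable_continuous_pt. exists (h x). apply Hh. }
  assert (Hf1int : RInt f1 0 1 = 0).
  { rewrite (is_RInt_unique f1 0 1 (f 1 - f 0)).
    - specialize (Hfp 0). rewrite Rplus_0_l in Hfp. rewrite Hfp. apply Rminus_diag.
    - apply (is_RInt_derive (V := R_CompleteNormedModule) f f1).
      + intros; apply is_derive_Reals, Hf1.
      + intros; apply continuity_pt_filterlim, Hf1c. }
  assert (Hgint : RInt g 0 1 = 0).
  { unfold g. rewrite RInt_plus_R, RInt_scal_R, Hf1int, conv_times_f_integral_zero.
    - simpl; ring.
    - apply ex_RInt_continuous_R, Hf1c.
    - apply ex_RInt_continuous_R. intros; apply continuity_pt_scal, Hf1c.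
    - apply ex_RInt_continuous_R, Hprod. }
  assert (Hgconst : RInt g 0 1 = g 0).
  { rewrite (RInt_ext_R _ (fun _ => g 0)) by (intros; apply (const_of_deriv_zero g Hg)).
    rewrite RInt_const_R. simpl; ring. }
  intros x. assert (Hx : g x = 0) by (rewrite (const_of_deriv_zero g Hg x 0); lra).
  unfold g in Hx. lra.
Qed.

Section FirstOrder.

Variable D : R.
Hypothesis HD : 0 < D.
Hypothesis Hfirst : forall x, D * f1 x = - (conv V f x * f x).

(* Harnack inequality: [|f'| <= C f] with [C = max V / D] by the first
   integral, so Groenwall bounds the oscillation of [f] along S^1. *)
Lemma harnack_S1 MV :
  (forall y, V y <= MV) ->
  forall t1 t2, f t1 * exp (- (MV / D) * dist_S1 t1 t2) <= f t2 /\
                f t2 <= f t1 * exp (MV / D * dist_S1 t1 t2).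
Proof.
  intros HMV t1 t2.
  assert (Hgr : forall x, Rabs (f1 x) <= MV / D * f x).
  { intros x. apply (Rmult_le_reg_l D); [exact HD|].
    rewrite <- (Rabs_pos_eq D) at 1 by lra.
    rewrite <- Rabs_mult, Hfirst, Rabs_Ropp, Rabs_mult, (Rabs_pos_eq (f x)) by apply Hfnn.
    replace (D * (MV / D * f x)) with (MV * f x) by (field; lra).
    apply Rmult_le_compat_r; [apply Hfnn|]. apply Rabs_le, conv_bounds, HMV. }
  destruct (periodic_exp_bound f _ Hfp (gronwall_exp_bound f f1 _ Hf1 Hgr) t1 t2)
    as [Hup Hlow].
  split; [|exact Hup].
  set (e := MV / D * dist_S1 t1 t2) in *.
  assert (Hinv : exp e * exp (- (MV / D) * dist_S1 t1 t2) = 1).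
  { rewrite <- exp_plus, <- exp_0. f_equal. unfold e. ring. }
  apply Rmult_le_compat_r with (r := exp (- (MV / D) * dist_S1 t1 t2)) in Hlow;
    [|apply Rlt_le, exp_pos].
  rewrite Rmult_assoc, Hinv, Rmult_1_r in Hlow. exact Hlow.
Qed.

(* Consequences for the extreme values: [max f / min f <= exp (C/2)] and,
   since [min f <= 1 <= max f], the absolute bounds [max f <= exp (C/2)] and
   [min f >= exp (- C/2)], where [C = max V / D >= 0]. *)
Lemma extrema_bounds MV :
  is_max_val V MV -> forall Mf mf, is_max_val f Mf -> is_min_val f mf ->
  Mf / mf <= exp (MV / D / 2) /\ Mf <= exp (MV / D / 2) /\
  exp (- (MV / D) / 2) <= mf.
Proof.
  intros [HMV _] Mf mf [HMf [x0 Hx0]] [Hmf [x1 Hx1]].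
  set (C := MV / D).
  assert (Hmf0 : 0 <= mf) by (rewrite <- Hx1; apply Hfnn).
  assert (HC : 0 <= C).
  { assert (HV0 : V 0 = 0) by (pose proof (HVodd 0) as H; rewrite Ropp_0 in H; lra).
    unfold C. apply Rdiv_le_0_compat; [rewrite <- HV0; apply HMV | exact HD]. }
  assert (Hratio : Mf <= mf * exp (C / 2)).
  { destruct (harnack_S1 MV HMV x1 x0) as [_ H]. rewrite Hx0, Hx1 in H. fold C in H.
    destruct (dist_S1_le_half x1 x0) as [_ Hd].
    assert (Hexp : exp (C * dist_S1 x1 x0) <= exp (C / 2)).
    { assert (Hle : C * dist_S1 x1 x0 <= C / 2) by nra.
      destruct (Rle_lt_or_eq_dec _ _ Hle) as [Hlt|Heq];
        [apply Rlt_le, exp_increasing, Hlt | rewrite Heq; apply Rle_refl]. }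
    nra. }
  assert (Hmass_extrema : mf <= 1 <= Mf)
    by (apply extrema_mass_bounds; intros x; split; [apply Hmf | apply HMf]).
  assert (Hinv : exp (- C / 2) * exp (C / 2) = 1)
    by (rewrite <- exp_plus, <- exp_0; f_equal; field).
  pose proof (exp_pos (C / 2)). pose proof (exp_pos (- C / 2)).
  split; [|split]; [| nra | nra].
  destruct (Req_dec mf 0) as [Hz|Hz].
  - rewrite Hz. unfold Rdiv. rewrite Rinv_0, Rmult_0_r. lra.
  - apply (Rmult_le_reg_r mf); [lra|]. unfold Rdiv.
    rewrite Rmult_assoc, Rinv_l by exact Hz. nra.
Qed.

End FirstOrder.

(* There [f' = 0], and the
   slopes of [V * f] are controlled by those of [V]; comparing [(V * f) f]
   with its one-sided linear majorant (resp. minorant) at the extremum bounds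
   [((V * f) f)' = - D f''].  *)
Lemma second_order_at_extrema (D : R) (f2 h V1 : R -> R) mV1 MV1 :
  0 < D ->
  (forall x, derivable_pt_lim (fun t => conv V f t * f t) x (h x)) ->
  (forall x, D * f2 x + h x = 0) ->
  (forall x, derivable_pt_lim V x (V1 x)) -> (forall x, mV1 <= V1 x <= MV1) ->
  (forall tmax, (forall x, f x <= f tmax) -> - (MV1 / D) * f tmax <= f2 tmax) /\
  (forall tmin, (forall x, f tmin <= f x) -> f2 tmin <= - (mV1 / D) * f tmin).
Proof.
  intros HD Hh Hstat HV1 HV1b.
  assert (Hslope := conv_increment_bounds V1 mV1 MV1 HV1 HV1b).
  split.
  - intros tm Hmax.
    assert (Hcrit : f1 tm = 0).
    { apply (deriv_maximum f (tm - 1) (tm + 1) tm (exist _ (f1 tm) (Hf1 tm)));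
        [lra | lra | intros; apply Hmax]. }
    assert (H := product_deriv_upper (conv V f) f tm (f1 tm) (h tm) MV1 (Hf1 tm) (Hh tm)
                   Hfnn (fun t Ht => proj2 (Hslope tm t (Rlt_le _ _ Ht)))).
    rewrite Hcrit in H. specialize (Hstat tm).
    apply (Rmult_le_reg_l D); [exact HD|].
    replace (D * (- (MV1 / D) * f tm)) with (- (MV1 * f tm)) by (field; lra). lra.
  - intros tm Hmin.
    assert (Hcrit : f1 tm = 0).
    { apply (deriv_minimum f (tm - 1) (tm + 1) tm (exist _ (f1 tm) (Hf1 tm)));
        [lra | lra | intros; apply Hmin]. }
    assert (H := product_deriv_lower (conv V f) f tm (f1 tm) (h tm) mV1 (Hf1 tm) (Hh tm)
                   Hfnn (fun t Ht => proj1 (Hslope tm t (Rlt_le _ _ Ht)))).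
    rewrite Hcrit in H. specialize (Hstat tm).
    apply (Rmult_le_reg_l D); [exact HD|].
    replace (D * (- (mV1 / D) * f tm)) with (- (mV1 * f tm)) by (field; lra). lra.
Qed.

End StationarySolution.

Theorem mainTheorem10
  (V : R -> R) (D : R) (f f1 f2 h : R -> R)
  (HVc : continuity V) (HVp : periodic1 V) (HVodd : forall x, V (- x) = - V x)
  (HD : 0 < D)
  (Hfp : periodic1 f)
  (Hf1 : forall x, derivable_pt_lim f x (f1 x))
  (Hf2 : forall x, derivable_pt_lim f1 x (f2 x))
  (Hf2c : continuity f2)
  (Hfnn : forall x, 0 <= f x)
  (Hmass : int_S1 f = 1)
  (Hh : forall x, derivable_pt_lim (fun t => conv V f t * f t) x (h x))
  (Hstat : forall x, D * f2 x + h x = 0) :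
  (forall x, D * f1 x = - (conv V f x * f x)) /\
  (forall MV, is_max_val V MV ->
     let C := MV / D in
     (forall t1 t2,
        f t1 * exp (- C * dist_S1 t1 t2) <= f t2 /\
        f t2 <= f t1 * exp (C * dist_S1 t1 t2)) /\
     (forall Mf mf, is_max_val f Mf -> is_min_val f mf ->
        Mf / mf <= exp (C / 2) /\ Mf <= exp (C / 2) /\ exp (- C / 2) <= mf)) /\
  (forall V1 : R -> R,
     (forall x, derivable_pt_lim V x (V1 x)) -> continuity V1 ->
     forall MV1 mV1, is_max_val V1 MV1 -> is_min_val V1 mV1 ->
     (forall tmax, (forall x, f x <= f tmax) -> - (MV1 / D) * f tmax <= f2 tmax) /\
     (forall tmin, (forall x, f tmin <= f x) -> f2 tmin <= - (mV1 / D) * f tmin)).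
Proof.
  assert (Hfirst : forall x, D * f1 x = - (conv V f x * f x))
    by exact (stationary_first_integral V f f1 HVc HVodd Hf1 Hfp D f2 h Hf2 Hh Hstat).
  split; [exact Hfirst | split].
  - intros MV HMV C. split.
    + exact (harnack_S1 V f f1 HVc HVodd Hf1 Hfnn Hmass Hfp D HD Hfirst MV (proj1 HMV)).
    + exact (extrema_bounds V f f1 HVc HVodd Hf1 Hfnn Hmass Hfp D HD Hfirst MV HMV).
  - intros V1 HV1 _ MV1 mV1 [HMV1 _] [HmV1 _].
    apply (second_order_at_extrema V f f1 HVc Hf1 Hfnn Hmass D f2 h V1 mV1 MV1 HD Hh Hstat HV1).
    intros x. split; [apply HmV1 | apply HMV1].
Qed.
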